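(* Let $T$ be a complete theory and $\phi,\psi$ formulas with $T\vdash\phi\,\mathtt u\,\psi$. Then $T\vdash\psi$, or there exists $m\in\omega$ such that $T\vdash\bigwedge_{i=0}^m[1]^i(\phi\wedge\neg\psi)\wedge[1]^{m+1}\psi$.
   Context: Fix $Var=\{p_n : n\in\omega\}$. The formulas of $L([1],[\omega],\mathtt u,\mathtt U)$ form the smallest set containing $Var$ and closed under $\neg\phi$, $[1]\phi$, $[\omega]\phi$, $(\phi\wedge\psi)$, $(\phi\,\mathtt u\,\psi)$, $(\phi\,\mathtt U\,\psi)$. Abbreviations: $\vee,\to,\leftrightarrow$ as usual; $\mathtt f\phi:=(\phi\to\phi)\,\mathtt u\,\phi$, $\mathtt g\phi:=\neg\mathtt f\neg\phi$; $[a]^0\phi:=\phi$, $[a]^{n+1}\phi:=[a][a]^n\phi$ for $a\in\{1,\omega\}$. A theory is a nonempty set of formulas. Proof system. Axioms: all instances of A1 substitution instances of classical tautologies; A2 $[1][\omega]\phi\leftrightarrow[\omega]\phi$; A3 $\neg[a]\phi\leftrightarrow[a]\neg\phi$ ($a\in\{1,\omega\}$); A4 $[a](\phi*\psi)\leftrightarrow([a]\phi*[a]\psi)$ ($a\in\{1,\omega\}$, $*\in\{\wedge,\vee,\to,\leftrightarrow\}$); A5 $\psi\to\phi\,\mathtt u\,\psi$; A6 $\phi\,\mathtt u\,\psi\to\phi\,\mathtt U\,\psi$; A7 $\big(\bigwedge_{k=0}^n[1]^k(\phi\wedge\neg\psi)\wedge[1]^{n+1}\psi\big)\to\phi\,\mathtt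 u\,\psi$ ($n\in\omega$); A8 $\big(\bigwedge_{k=0}^n[\omega]^k\mathtt g(\phi\wedge\neg\psi)\wedge[\omega]^{n+1}(\phi\,\mathtt u\,\psi)\big)\to\phi\,\mathtt U\,\psi$ ($n\in\omega$). Rules: R1 from $\phi$ and $\phi\to\psi$ infer $\psi$; R2 from $\phi$ infer $[a]\phi$, $a\in\{1,\omega\}$; R3 from $\theta\to\neg\psi$ and all $\theta\to\big(\bigvee_{k=0}^n[1]^k(\neg\phi\vee\psi)\vee[1]^{n+1}\neg\psi\big)$, $n\in\omega$, infer $\theta\to\neg(\phi\,\mathtt u\,\psi)$; R4 from $\theta\to\neg(\phi\,\mathtt u\,\psi)$ and all $\theta\to\big(\bigvee_{k=0}^n[\omega]^k\neg\mathtt g(\phi\wedge\neg\psi)\vee[\omega]^{n+1}\neg(\phi\,\mathtt u\,\psi)\big)$, $n\in\omega$, infer $\theta\to\neg(\phi\,\mathtt U\,\psi)$. $\vdash\phi$ ($\phi$ is a theorem) iff there is a sequence $(\phi_\beta)_{\beta\le\alpha}$, $\alpha$ a countable ordinal, with $\phi_\alpha=\phi$ and each $\phi_\beta$ an axiom or obtained from earlier members by a rule. $T\vdash\phi$ iff there is such a sequence in which each member is an axiom, a member of $T$, or obtained from earlier members by a rule, where R2 may only be applied to theorems. A theory $T$ is consistent iff there is no formula $\chi$ with $T\vdash\chi$ and $T\vdash\neg\chi$; $T$ is complete iff it is consistent and for every formula $\chi$, $T\vdash\chi$ or $T\vdash\neg\chi$. *)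

From Stdlib Require Import Arith.

Inductive modality : Type := M1 | Mw.

Inductive formula : Type :=
| Var   : nat -> formula
| Neg   : formula -> formula
| Box   : modality -> formula -> formula
| And   : formula -> formula -> formula
| Un    : formula -> formula -> formula    (* phi u psi *)
| UU    : formula -> formula -> formula.   (* phi U psi *)

Definition Or  (a b : formula) : formula := Neg (And (Neg a) (Neg b)).
Definition Imp (a b : formula) : formula := Or (Neg a) b.
Definition Iff (a b : formula) : formula := And (Imp a b) (Imp b a).
Definition Ff (a : formula) : formula := Un (Imp a a) a.
Definition Gg (a : formula) : formula := Neg (Ff (Neg a)).

Fixpoint boxn (m : modality) (n : nat) (a : formula) : formula :=
  match n with 0 => a | S k => Box m (boxn m k a) end.

Fixpoint bigAnd (n : nat) (F : nat -> formula) : formula :=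
  match n with 0 => F 0 | S k => And (bigAnd k F) (F (S k)) end.
Fixpoint bigOr (n : nat) (F : nat -> formula) : formula :=
  match n with 0 => F 0 | S k => Or (bigOr k F) (F (S k)) end.

Fixpoint is_prop (p : formula) : Prop :=
  match p with
  | Var _ => True
  | Neg a => is_prop a
  | And a b => is_prop a /\ is_prop b
  | _ => False
  end.

Fixpoint peval (v : nat -> bool) (p : formula) : bool :=
  match p with
  | Var n => v n
  | Neg a => negb (peval v a)
  | And a b => andb (peval v a) (peval v b)
  | _ => false
  end.

Definition tautology (p : formula) : Prop :=
  is_prop p /\ forall v : nat -> bool, peval v p = true.

Fixpoint subst (s : nat -> formula) (p : formula) : formula :=
  match p with
  | Var n => s n
  | Neg a => Neg (subst s a)
  | Box m a => Box m (subst s a)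
  | And a b => And (subst s a) (subst s b)
  | Un a b => Un (subst s a) (subst s b)
  | UU a b => UU (subst s a) (subst s b)
  end.

Inductive binconn : (formula -> formula -> formula) -> Prop :=
| bc_and : binconn And | bc_or : binconn Or
| bc_imp : binconn Imp | bc_iff : binconn Iff.

Inductive IsAxiom : formula -> Prop :=
| A1 : forall p s, tautology p -> IsAxiom (subst s p)
| A2 : forall a, IsAxiom (Iff (Box M1 (Box Mw a)) (Box Mw a))
| A3 : forall m a, IsAxiom (Iff (Neg (Box m a)) (Box m (Neg a)))
| A4 : forall m op a b, binconn op ->
    IsAxiom (Iff (Box m (op a b)) (op (Box m a) (Box m b)))
| A5 : forall a b, IsAxiom (Imp b (Un a b))
| A6 : forall a b, IsAxiom (Imp (Un a b) (UU a b))
| A7 : forall a b n,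
    IsAxiom (Imp (And (bigAnd n (fun k => boxn M1 k (And a (Neg b))))
                    (boxn M1 (S n) b))
               (Un a b))
| A8 : forall a b n,
    IsAxiom (Imp (And (bigAnd n (fun k => boxn Mw k (Gg (And a (Neg b)))))
                    (boxn Mw (S n) (Un a b)))
               (UU a b)).

(* Theorems: the least set containing the axioms and closed under R1-R4.
   Derivations with countably-branching rules = well-founded trees,
   equivalently sequences of countable ordinal length. *)
Inductive Thm : formula -> Prop :=
| T_ax : forall a, IsAxiom a -> Thm a
| T_R1 : forall a b, Thm a -> Thm (Imp a b) -> Thm b
| T_R2 : forall m a, Thm a -> Thm (Box m a)
| T_R3 : forall th a b,
    Thm (Imp th (Neg b)) ->
    (forall n, Thm (Imp th (Or (bigOr n (fun k => boxn M1 k (Or (Neg a) b)))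
                               (boxn M1 (S n) (Neg b))))) ->
    Thm (Imp th (Neg (Un a b)))
| T_R4 : forall th a b,
    Thm (Imp th (Neg (Un a b))) ->
    (forall n, Thm (Imp th (Or (bigOr n (fun k => boxn Mw k (Neg (Gg (And a (Neg b))))))
                               (boxn Mw (S n) (Neg (Un a b)))))) ->
    Thm (Imp th (Neg (UU a b))).

Definition theory := formula -> Prop.

(* T |- phi : R2 only applicable to theorems *)
Inductive Der (T : theory) : formula -> Prop :=
| D_ax : forall a, IsAxiom a -> Der T a
| D_hyp : forall a, T a -> Der T a
| D_R1 : forall a b, Der T a -> Der T (Imp a b) -> Der T b
| D_R2 : forall m a, Thm a -> Der T (Box m a)
| D_R3 : forall th a b,
    Der T (Imp th (Neg b)) ->
    (forall n, Der T (Imp th (Or (bigOr n (fun k => boxn M1 k (Or (Neg a) b)))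
                                 (boxn M1 (S n) (Neg b))))) ->
    Der T (Imp th (Neg (Un a b)))
| D_R4 : forall th a b,
    Der T (Imp th (Neg (Un a b))) ->
    (forall n, Der T (Imp th (Or (bigOr n (fun k => boxn Mw k (Neg (Gg (And a (Neg b))))))
                                 (boxn Mw (S n) (Neg (Un a b)))))) ->
    Der T (Imp th (Neg (UU a b))).

Definition is_theory (T : theory) : Prop := exists a, T a.
Definition consistent (T : theory) : Prop :=
  ~ exists c, Der T c /\ Der T (Neg c).
Definition complete (T : theory) : Prop :=
  consistent T /\ forall c, Der T c \/ Der T (Neg c).

(* By completeness T proves psi or ~psi.  In the second case,
   suppose that T proves none of the A7-antecedents; by completeness T then
   proves the negation of each of them.  The negation of the m-th antecedent
   is provably equivalent to the m-th infinitary premise of rule R3, so R3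
   (with the trivial hypothesis theta = T) yields  ~(phi u psi),  which
   contradicts the consistency of T. *)

From Stdlib Require Import Classical.

(* Substitution of four formulas for the variables p0..p3; every tautology
   used below is in these four variables. *)
Definition subst4 (a b c d : formula) : nat -> formula :=
  fun n => match n with 0 => a | 1 => b | 2 => c | _ => d end.

Lemma taut_thm (p a b c d : formula) :
  tautology p -> Thm (subst (subst4 a b c d) p).
Proof. intro Hp. apply T_ax, A1, Hp. Qed.

Ltac prove_tautology :=
  split;
  [ cbv; tauto
  | let v := fresh "v" in
    intro v; cbv; destruct (v 0), (v 1), (v 2), (v 3); reflexivity ].

Lemma thm_der (T : theory) (a : formula) : Thm a -> Der T a.
Proof.
  induction 1 as [a Hax | a b _ IHa _ IHab | | |].
  - apply D_ax, Hax.
  - exact (D_R1 T a b IHa IHab).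
  - apply D_R2; assumption.
  - apply D_R3; assumption.
  - apply D_R4; assumption.
Qed.

Lemma thm_mp (a b : formula) : Thm a -> Thm (Imp a b) -> Thm b.
Proof. intros Ha Hab. exact (T_R1 a b Ha Hab). Qed.

Lemma der_thm_imp (T : theory) (a b : formula) :
  Der T a -> Thm (Imp a b) -> Der T b.
Proof. intros Ha Hab. exact (D_R1 T a b Ha (thm_der T _ Hab)). Qed.

Lemma iff_imp_r (a b : formula) : Thm (Iff a b) -> Thm (Imp b a).
Proof.
  intro H. eapply thm_mp; [exact H |].
  exact (taut_thm (Imp (Iff (Var 0) (Var 1)) (Imp (Var 1) (Var 0))) a b a a
           ltac:(prove_tautology)).
Qed.

Lemma iff_mp (a b : formula) : Thm (Iff a b) -> Thm a -> Thm b.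
Proof.
  intros H Ha. eapply thm_mp; [exact Ha |]. eapply thm_mp; [exact H |].
  exact (taut_thm (Imp (Iff (Var 0) (Var 1)) (Imp (Var 0) (Var 1))) a b a a
           ltac:(prove_tautology)).
Qed.

Lemma iff_refl (a : formula) : Thm (Iff a a).
Proof. exact (taut_thm (Iff (Var 0) (Var 0)) a a a a ltac:(prove_tautology)). Qed.

Lemma iff_sym (a b : formula) : Thm (Iff a b) -> Thm (Iff b a).
Proof.
  intro H. eapply thm_mp; [exact H |].
  exact (taut_thm (Imp (Iff (Var 0) (Var 1)) (Iff (Var 1) (Var 0))) a b a a
           ltac:(prove_tautology)).
Qed.

Lemma iff_trans (a b c : formula) :
  Thm (Iff a b) -> Thm (Iff b c) -> Thm (Iff a c).
Proof.
  intros Hab Hbc. eapply thm_mp; [exact Hbc |]. eapply thm_mp; [exact Hab |].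
  exact (taut_thm (Imp (Iff (Var 0) (Var 1))
                       (Imp (Iff (Var 1) (Var 2)) (Iff (Var 0) (Var 2))))
           a b c a ltac:(prove_tautology)).
Qed.

Lemma iff_neg (a b : formula) : Thm (Iff a b) -> Thm (Iff (Neg a) (Neg b)).
Proof.
  intro H. eapply thm_mp; [exact H |].
  exact (taut_thm (Imp (Iff (Var 0) (Var 1)) (Iff (Neg (Var 0)) (Neg (Var 1))))
           a b a a ltac:(prove_tautology)).
Qed.

Lemma iff_or_neg_and (x y z w : formula) :
  Thm (Iff x (Neg y)) -> Thm (Iff z (Neg w)) ->
  Thm (Iff (Or x z) (Neg (And y w))).
Proof.
  intros Hxy Hzw. eapply thm_mp; [exact Hzw |]. eapply thm_mp; [exact Hxy |].
  exact (taut_thm (Imp (Iff (Var 0) (Neg (Var 1)))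
                       (Imp (Iff (Var 2) (Neg (Var 3)))
                            (Iff (Or (Var 0) (Var 2)) (Neg (And (Var 1) (Var 3))))))
           x y z w ltac:(prove_tautology)).
Qed.

Lemma bigOr_neg_bigAnd (n : nat) (F G : nat -> formula) :
  (forall k, Thm (Iff (F k) (Neg (G k)))) ->
  Thm (Iff (bigOr n F) (Neg (bigAnd n G))).
Proof.
  intro HFG. induction n as [| n IH]; simpl.
  - apply HFG.
  - apply iff_or_neg_and; [exact IH | apply HFG].
Qed.

Lemma box_cong (m : modality) (a b : formula) :
  Thm (Iff a b) -> Thm (Iff (Box m a) (Box m b)).
Proof.
  intro H. apply iff_mp with (Box m (Iff a b)).
  - apply T_ax, (A4 m Iff a b bc_iff).
  - apply T_R2, H.
Qed.

Lemma boxn_cong (m : modality) (k : nat) (a b : formula) :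
  Thm (Iff a b) -> Thm (Iff (boxn m k a) (boxn m k b)).
Proof. intro H. induction k; simpl; auto using box_cong. Qed.

Lemma boxn_neg (m : modality) (k : nat) (a : formula) :
  Thm (Iff (boxn m k (Neg a)) (Neg (boxn m k a))).
Proof.
  induction k as [| k IH]; simpl.
  - apply iff_refl.
  - eapply iff_trans; [apply box_cong, IH |].
    apply iff_sym, T_ax, A3.
Qed.

Lemma boxn_or_neg_and (m : modality) (k : nat) (a b : formula) :
  Thm (Iff (boxn m k (Or (Neg a) b)) (Neg (boxn m k (And a (Neg b))))).
Proof.
  eapply iff_trans; [apply boxn_neg |].
  apply iff_neg, boxn_cong.
  exact (taut_thm (Iff (And (Neg (Neg (Var 0))) (Var 1)) (And (Var 0) (Var 1)))
           a (Neg b) a a ltac:(prove_tautology)).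
Qed.

(* The m-th antecedent of axiom A7 for  phi u psi. *)
Definition until_witness (phi psi : formula) (m : nat) : formula :=
  And (bigAnd m (fun i => boxn M1 i (And phi (Neg psi))))
      (boxn M1 (S m) psi).

Lemma r3_premise_iff (phi psi : formula) (m : nat) :
  Thm (Iff (Or (bigOr m (fun k => boxn M1 k (Or (Neg phi) psi)))
               (boxn M1 (S m) (Neg psi)))
           (Neg (until_witness phi psi m))).
Proof.
  apply iff_or_neg_and.
  - apply bigOr_neg_bigAnd. intro k. apply boxn_or_neg_and.
  - apply boxn_neg.
Qed.

(* The trivial hypothesis  p0 -> p0  used as theta in R3. *)
Definition Top : formula := Imp (Var 0) (Var 0).

Lemma der_Top (T : theory) : Der T Top.
Proof. apply thm_der. exact (taut_thm Top (Var 0) (Var 1) (Var 2) (Var 3) ltac:(prove_tautology)). Qed.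

Lemma der_weaken_Top (T : theory) (a : formula) : Der T a -> Der T (Imp Top a).
Proof.
  intro Ha. eapply der_thm_imp; [exact Ha |].
  exact (taut_thm (Imp (Var 0) (Imp (Var 1) (Var 0))) a Top a a
           ltac:(prove_tautology)).
Qed.

Lemma der_not_until (T : theory) (phi psi : formula) :
  Der T (Neg psi) ->
  (forall m, Der T (Neg (until_witness phi psi m))) ->
  Der T (Neg (Un phi psi)).
Proof.
  intros Hnpsi Hnwit.
  apply D_R1 with Top; [apply der_Top |].
  apply D_R3.
  - apply der_weaken_Top, Hnpsi.
  - intro m. apply der_weaken_Top.
    eapply der_thm_imp; [apply Hnwit |].
    apply iff_imp_r, r3_premise_iff.
Qed.

Theorem mainTheorem7 (T : theory) (phi psi : formula) :
  is_theory T -> complete T -> Der T (Un phi psi) ->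
  Der T psi \/
  exists m : nat,
    Der T (And (bigAnd m (fun i => boxn M1 i (And phi (Neg psi))))
               (boxn M1 (S m) psi)).
Proof.
  intros _ [Hcons Hcomp] Huntil.
  destruct (Hcomp psi) as [Hpsi | Hnpsi]; [left; exact Hpsi | right].
  apply NNPP. intro Hno_witness.
  apply Hcons. exists (Un phi psi). split; [exact Huntil |].
  apply der_not_until; [exact Hnpsi |].
  intro m. destruct (Hcomp (until_witness phi psi m)) as [Hwit | Hnwit].
  - exfalso. apply Hno_witness. exists m. exact Hwit.
  - exact Hnwit.
Qed.
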